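(* Let $\mathbf{s}_1,\dots,\mathbf{s}_l\in\mathbb{Q}^n$, let $\mathcal P$ be the convex hull of $\bigcup_{i=1}^l(\mathbf{s}_i+\mathbb{R}_{\le0}^n)$, $P=\mathcal P\cap\mathbb{Q}^n$, and fix a monomial order $\le_m$. For every $f\in K\{\mathbf{X};P\}$, the set $$\mathrm{Terms}_P(\langle f\rangle)=\{\mathrm{LT}_{\mathbf{r}}(\langle f\rangle):\mathbf{r}\in P\}$$ is finite, where $\langle f\rangle=f\,K\{\mathbf{X};P\}$.
   Context: $K$ is a field complete for a discrete valuation $\mathrm{val}$. For $\mathbf{r}\in\mathbb{Q}^n$, $\mathrm{val}_{\mathbf{r}}(a\mathbf{X}^\alpha)=\mathrm{val}(a)-\mathbf{r}\cdot\alpha$. $K\{\mathbf{X};P\}$ is the set of power series $\sum_{\alpha\in\mathbb{N}^n}a_\alpha\mathbf{X}^\alpha$ such that for every $\mathbf{r}\in P$, $\mathrm{val}_{\mathbf{r}}(a_\alpha\mathbf{X}^\alpha)\to+\infty$ as $|\alpha|\to\infty$. For $\mathbf{r}\in P$ and a nonzero $g\in K\{\mathbf{X};P\}$, $\mathrm{LT}_{\mathbf{r}}(g)$ is the largest term of $g$ for the order $a\mathbf{X}^\alpha<b\mathbf{X}^\beta$ iff $\mathrm{val}_{\mathbf{r}}(a\mathbf{X}^\alpha)>\mathrm{val}_{\mathbf{r}}(b\mathbf{X}^\beta)$, or equal and $\mathbf{X}^\alpha<_m\mathbf{X}^\beta$. For an ideal $J$ of $K\{\mathbf{X};P\}$,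 $\mathrm{LT}_{\mathbf{r}}(J)$ is the ideal of $K[\mathbf{X}]$ generated by $\{\mathrm{LT}_{\mathbf{r}}(g): g\in J\setminus\{0\}\}$. *)

From HB Require Import structures.
From mathcomp Require Import all_boot all_order all_algebra.
From mathcomp Require Import mpoly.

Set Implicit Arguments.
Unset Strict Implicit.
Unset Printing Implicit Defensive.

Import Order.TTheory GRing.Theory Num.Theory.
Local Open Scope ring_scope.

Section Defs.
Variable K : fieldType.

(* A (normalized) discrete valuation on K, given by its values on nonzero
   elements (val 0 = +oo is encoded by guarding every use with "<> 0"). *)
Definition discrete_valuation (v : K -> int) : Prop :=
  (forall x y, x != 0 -> y != 0 -> v (x * y) = v x + v y) /\
  (forall x y, x != 0 -> y != 0 -> x + y != 0 ->
      Num.min (v x) (v y) <= v (x + y)) /\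
  (exists pi : K, pi != 0 /\ v pi = 1).

Definition v_complete (v : K -> int) : Prop :=
  forall u : nat -> K,
    (forall M : int, exists N : nat, forall i j, (N <= i)%N -> (N <= j)%N ->
        u i = u j \/ M <= v (u i - u j)) ->
    exists l : K, forall M : int, exists N : nat, forall i, (N <= i)%N ->
        u i = l \/ M <= v (u i - l).

Variable n : nat.

Definition pseries := 'X_{1..n} -> K.

(* val_r (a X^al) = val a - r . al   (meaningful for a <> 0) *)
Definition valr (v : K -> int) (r : 'I_n -> rat) (a : K) (al : 'X_{1..n}) : rat :=
  (v a)%:~R - \sum_(i < n) r i * (al i)%:R.

Definition in_KXP (v : K -> int) (P : ('I_n -> rat) -> Prop) (g : pseries) : Prop :=
  forall r, P r -> forall M : rat, exists N : nat, forall al : 'X_{1..n},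
    (N <= mdeg al)%N -> g al = 0 \/ M <= valr v r (g al) al.

Definition ps_mul (f g : pseries) : pseries :=
  fun al => \sum_(b : 'X_{1..n < (mdeg al).+1} | (bmnm b <= al)%MM)
              f b * g (al - bmnm b)%MM.

Definition principal_ideal (v : K -> int) (P : ('I_n -> rat) -> Prop)
    (f g : pseries) : Prop :=
  exists h : pseries, in_KXP v P h /\ forall al, g al = ps_mul f h al.

Definition monomial_order (le : rel 'X_{1..n}) : Prop :=
  (forall a, le a a) /\
  (forall a b, le a b -> le b a -> a = b) /\
  (forall a b c, le a b -> le b c -> le a c) /\
  (forall a b, le a b \/ le b a) /\
  (forall a b c, le a b -> le (a + c)%MM (b + c)%MM) /\
  well_founded (fun a b => le a b /\ a != b).

Definition is_LT (v : K -> int) (le : rel 'X_{1..n}) (r : 'I_n -> rat)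
    (g : pseries) (a : K) (al : 'X_{1..n}) : Prop :=
  a = g al /\ a != 0 /\
  forall be, g be != 0 ->
    valr v r a al < valr v r (g be) be \/
    (valr v r (g be) be = valr v r a al /\ le be al).

Definition LT_ideal (v : K -> int) (le : rel 'X_{1..n}) (r : 'I_n -> rat)
    (J : pseries -> Prop) (p : {mpoly K[n]}) : Prop :=
  exists (m : nat) (c t : 'I_m -> {mpoly K[n]}),
    (forall i, exists (g : pseries) (a : K) (al : 'X_{1..n}),
        J g /\ is_LT v le r g a al /\ t i = a *: 'X_[al]) /\
    p = \sum_(i < m) c i * t i.

End Defs.

(* r in P = (convex hull of U_i (s_i + R_{<=0}^n)) /\ Q^n,
   with the convex hull taken via rational convex combinations. *)
Definition in_P (n l : nat) (s : 'I_l -> 'I_n -> rat) (r : 'I_n -> rat) : Prop :=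
  exists (m : nat) (lam : 'I_m -> rat) (p : 'I_m -> 'I_n -> rat),
    (forall k, 0 <= lam k) /\ \sum_(k < m) lam k = 1 /\
    (forall k, exists i : 'I_l, forall j, p k j <= s i j) /\
    (forall j, r j = \sum_(k < m) lam k * p k j).

From HB Require Import structures.
From mathcomp Require Import all_boot all_order all_algebra.
From mathcomp Require Import mpoly.
From mathcomp Require Import lra.
From Stdlib Require Import ClassicalEpsilon FunctionalExtensionality.

Set Implicit Arguments.
Unset Strict Implicit.
Unset Printing Implicit Defensive.

Import Order.TTheory GRing.Theory Num.Theory.
Local Open Scope ring_scope.

(* If f = 0, every LT_r(<f>) is 0.  Otherwise the exponent of LT_r(gh) is the
   sum of those of LT_r(g) and LT_r(h), so LT_r(<f>) is the monomial ideal
   generated by the exponent of LT_r(f), and it suffices to show that these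
   exponents have bounded degree.  If not, Dickson's lemma yields exponents
   al0 <= al (componentwise) of LT_{r0}(f) and LT_r(f) with |al| arbitrarily
   large.  Maximality of LT_r(f) gives
   val(f_al) - val(f_al0) <= r.(al - al0) <= s_t.(al - al0) for some vertex s_t,
   since al - al0 >= 0 and r lies below a convex combination of the s_i; but
   the convergence of f at s_t gives the reverse strict inequality once |al| is
   large. *)

Lemma seq_max_total (T : eqType) (R : T -> T -> Prop) (x0 : T) (s : seq T) :
  (forall x y, R x y \/ R y x) -> (forall x y z, R x y -> R y z -> R x z) ->
  exists2 m, m \in x0 :: s & forall x, x \in x0 :: s -> R x m.
Proof.
move=> R_total R_trans; have R_refl x : R x x by case: (R_total x x).
elim: s x0 => [|y s IH] x0.
  by exists x0 => [|x]; rewrite ?mem_head // inE => /eqP->.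
have [m ms m_max] := IH y; case: (R_total m x0) => [Rmx0|Rx0m].
  exists x0 => [|x]; first exact: mem_head.
  by rewrite inE => /orP[/eqP->//|/m_max Rxm]; apply: R_trans Rxm Rmx0.
exists m => [|x]; first by rewrite inE ms orbT.
by rewrite inE => /orP[/eqP->//|]; apply: m_max.
Qed.

Lemma classic_ex_minn (Q : nat -> Prop) x :
  Q x -> exists2 y, Q y & forall z, Q z -> (y <= z)%N.
Proof.
elim/ltn_ind: x => x IH Qx.
have [[z Qz lt_zx]|none] := classic (exists2 z, Q z & (z < x)%N); first exact: IH Qz.
by exists x => // z Qz; rewrite leqNgt; apply/negP => lt_zx; apply: none; exists z.
Qed.

(* Each index of the subsequence minimizes [w] among all later indices. *)
Lemma nat_nondecreasing_subseq (w : nat -> nat) :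
  exists2 psi : nat -> nat,
    {homo psi : a b / (a < b)%N} & {homo w \o psi : a b / (a <= b)%N}.
Proof.
have later_min m : exists j, (m < j)%N /\ forall j', (m < j')%N -> (w j <= w j')%N.
  have [_ [j lt_mj <-] j_min] :=
    @classic_ex_minn (fun x => exists2 j, (m < j)%N & w j = x) _
      (ex_intro2 _ _ m.+1 (ltnSn m) erefl).
  by exists j; split=> // j' lt_mj'; apply: j_min; exists j'.
have [next next_min] := choice _ later_min.
pose psi k := iter k.+1 next 0%N; exists psi.
  by apply: (@homo_ltn _ psi (fun a b => (a < b)%N)) => [x y z|k];
    [exact/ltn_trans | exact: (next_min _).1].
apply: (@homo_leq _ (w \o psi) (fun a b => (a <= b)%N)) => [//|x y z|k /=].
  exact/leq_trans.
have [lt_k min_k] := next_min (iter k next 0%N).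
by apply: min_k; apply: ltn_trans lt_k (next_min _).1.
Qed.

Lemma dickson n (u : nat -> 'X_{1..n}) :
  exists2 phi : nat -> nat,
    {homo phi : a b / (a < b)%N} & {homo u \o phi : a b / (a <= b)%N >-> (a <= b)%MM}.
Proof.
suff [phi phi_incr phi_mono] : exists2 phi : nat -> nat, {homo phi : a b / (a < b)%N} &
    forall j, j \in enum 'I_n -> {homo (fun k => u (phi k) j) : a b / (a <= b)%N}.
  exists phi => // a b le_ab; apply/mnm_lepP => j.
  exact: phi_mono (mem_enum _ _) _ _ le_ab.
elim: (enum 'I_n) => [|c cs [phi phi_incr phi_mono]]; first by exists id.
have [psi psi_incr psi_mono] := nat_nondecreasing_subseq (fun k => u (phi k) c).
exists (phi \o psi) => [a b /psi_incr/phi_incr //|j].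
rewrite inE => /predU1P[->|/phi_mono mono_j] a b le_ab; first exact: psi_mono.
by apply: mono_j; apply: (ltnW_homo psi_incr).
Qed.

Section Valuation.
Variables (K : fieldType) (v : K -> int).
Hypothesis v_val : discrete_valuation v.

Lemma valM x y : x != 0 -> y != 0 -> v (x * y) = v x + v y.
Proof. by case: v_val => valM _; apply: valM. Qed.

Lemma val_add_ge x y :
  x != 0 -> y != 0 -> x + y != 0 -> Num.min (v x) (v y) <= v (x + y).
Proof. by case: v_val => _ [val_add _]; apply: val_add. Qed.

Lemma val1 : v 1 = 0.
Proof.
have := valM (oner_neq0 K) (oner_neq0 K).
by rewrite mulr1 -{1}(addr0 (v 1)) => /addrI.
Qed.

Lemma valN x : x != 0 -> v (- x) = v x.
Proof.
move=> x0; have N1_0 : (-1 : K) != 0 by rewrite oppr_eq0 oner_neq0.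
have valN1 : v (-1) = 0.
  have : v (-1) *+ 2 = 0 by rewrite mulr2n -valM // mulrNN mulr1 val1.
  by move/eqP; rewrite mulrn_eq0 => /eqP.
by rewrite -mulN1r valM // valN1 add0r.
Qed.

Lemma val_sum_ge_term (I : eqType) (r : seq I) (P : pred I) (F : I -> K) :
  \sum_(i <- r | P i) F i != 0 ->
  exists i, [/\ i \in r, P i, F i != 0 & v (F i) <= v (\sum_(i <- r | P i) F i)].
Proof.
elim: r => [|x r IH]; first by rewrite big_nil eqxx.
rewrite big_cons; case: ifP => Px; last first.
  by move=> /IH [i [ir Pi Fi vi]]; exists i; rewrite inE ir orbT.
set S := \sum_(i <- r | P i) F i => FxS0.
have [S0|S0] := eqVneq S 0.
  by exists x; move: FxS0; rewrite S0 addr0 mem_head.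
have [Fx0|Fx0] := eqVneq (F x) 0.
  move: FxS0; rewrite Fx0 add0r => /IH [i [ir Pi Fi vi]].
  by exists i; rewrite inE ir orbT.
have := val_add_ge Fx0 S0 FxS0; rewrite ge_min => /orP[vx|vS].
  by exists x; rewrite mem_head.
have [i [ir Pi Fi vi]] := IH S0.
by exists i; split=> //; [rewrite inE ir orbT | apply: le_trans vi vS].
Qed.

Lemma val_add_dominant x y : x != 0 -> y != 0 -> v x < v y ->
  x + y != 0 /\ v (x + y) = v x.
Proof.
move=> x0 y0 lt_xy.
have xy0 : x + y != 0.
  apply: contraTneq lt_xy => /eqP; rewrite addrC addr_eq0 => /eqP->.
  by rewrite valN // ltxx.
split=> //.
have := val_add_ge x0 y0 xy0; rewrite (min_idPl (ltW lt_xy)) => ge_x.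
have Ny0 : - y != 0 by rewrite oppr_eq0.
have := val_add_ge xy0 Ny0; rewrite addrK valN // => /(_ x0).
rewrite ge_min (leNgt (v y)) lt_xy orbF => le_x.
by apply/eqP; rewrite eq_le le_x.
Qed.

End Valuation.

Definition wdeg n (r : 'I_n -> rat) (al : 'X_{1..n}) : rat :=
  \sum_(i < n) r i * (al i)%:R.

Lemma wdegD n (r : 'I_n -> rat) (al be : 'X_{1..n}) :
  wdeg r (al + be)%MM = wdeg r al + wdeg r be.
Proof.
by rewrite /wdeg -big_split; apply: eq_bigr => i _; rewrite mnmDE natrD mulrDr.
Qed.

Section WeightedValuation.
Variables (K : fieldType) (v : K -> int) (n : nat) (r : 'I_n -> rat).

Lemma valrE (a : K) (al : 'X_{1..n}) : valr v r a al = (v a)%:~R - wdeg r al.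
Proof. by []. Qed.

Lemma ler_valr (a b : K) (al : 'X_{1..n}) :
  (valr v r a al <= valr v r b al) = (v a <= v b).
Proof. by rewrite !valrE lerD2r ler_int. Qed.

Lemma ltr_valr (a b : K) (al : 'X_{1..n}) :
  (valr v r a al < valr v r b al) = (v a < v b).
Proof. by rewrite !valrE ltrD2r ltr_int. Qed.

Lemma valrM (a b : K) (al be : 'X_{1..n}) : discrete_valuation v ->
  a != 0 -> b != 0 -> valr v r (a * b) (al + be)%MM = valr v r a al + valr v r b be.
Proof. by move=> v_val a0 b0; rewrite !valrE wdegD (valM v_val a0 b0) intrD; lra. Qed.

End WeightedValuation.

Section MonomialOrder.
Variables (n : nat) (le : rel 'X_{1..n}).
Hypothesis mo : monomial_order le.

Lemma mo_anti a b : le a b -> le b a -> a = b.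
Proof. by case: mo => _ [anti _]; apply: anti. Qed.

Lemma mo_trans a b c : le a b -> le b c -> le a c.
Proof. by case: mo => _ [_ [trans _]]; apply: trans. Qed.

Lemma mo_total a b : le a b \/ le b a.
Proof. by case: mo => _ [_ [_ [total _]]]; apply: total. Qed.

Lemma mo_addr a b c : le a b -> le (a + c)%MM (b + c)%MM.
Proof. by case: mo => _ [_ [_ [_ [addr _]]]]; apply: addr. Qed.

Lemma mo_addl a b c : le a b -> le (c + a)%MM (c + b)%MM.
Proof. by rewrite ![(c + _)%MM]addmC; apply: mo_addr. Qed.

Lemma mo_add2 a b c d : le a b -> le c d -> le (a + c)%MM (b + d)%MM.
Proof. by move=> le_ab le_cd; apply: mo_trans (mo_addr c le_ab) (mo_addl b le_cd). Qed.

Lemma mo_add_eq a b c d : le a b -> le c d -> (a + c = b + d)%MM -> a = b.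
Proof.
move=> le_ab le_cd eq_ac_bd; apply: (@addIm _ c); apply: mo_anti (mo_addr c le_ab) _.
by rewrite eq_ac_bd; apply: mo_addl.
Qed.

End MonomialOrder.

Section LeadingTerm.
Variables (K : fieldType) (v : K -> int) (n : nat) (le : rel 'X_{1..n}).
Hypothesis mo : monomial_order le.
Variable r : 'I_n -> rat.
Implicit Types (g : pseries K n) (a : K) (al be : 'X_{1..n}).

Lemma is_LT_valr_le g a al be : is_LT v le r g a al -> g be != 0 ->
  valr v r a al <= valr v r (g be) be /\
  (valr v r (g be) be = valr v r a al -> le be al).
Proof.
move=> [_ [_ LT_max]] gbe; case: (LT_max be gbe) => [lt|[eq le_be]].
  by split=> [|eq]; [apply: ltW | move: lt; rewrite eq ltxx].
by rewrite eq.
Qed.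

Lemma LT_uniq g a al b be : is_LT v le r g a al -> is_LT v le r g b be -> al = be.
Proof.
move=> LTa LTb; have [ea [a0 _]] := LTa; have [eb [b0 _]] := LTb; subst a b.
have [le_ab eq_ab] := is_LT_valr_le LTb a0.
have [le_ba eq_ba] := is_LT_valr_le LTa b0.
have E : valr v r (g al) al = valr v r (g be) be by apply/eqP; rewrite eq_le le_ab le_ba.
exact: (mo_anti mo (eq_ab E) (eq_ba (esym E))).
Qed.

Lemma LT_exists (P : ('I_n -> rat) -> Prop) g al0 :
  in_KXP v P g -> P r -> g al0 != 0 -> exists al, is_LT v le r g (g al) al.
Proof.
move=> g_conv Pr g_al0.
have [N small] := g_conv r Pr (valr v r (g al0) al0 + 1).
pose R al be := valr v r (g be) be < valr v r (g al) al \/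
  (valr v r (g al) al = valr v r (g be) be /\ le al be).
have R_total al be : R al be \/ R be al.
  rewrite /R; case: (ltgtP (valr v r (g al) al) (valr v r (g be) be)) => E.
  - by right; left.
  - by left; left.
  - by case: (mo_total mo al be) => ?; [left | right]; right.
have R_trans al be ga : R al be -> R be ga -> R al ga.
  rewrite /R => -[lt1|[eq1 le1]] [lt2|[eq2 le2]].
  - by left; apply: lt_trans lt2 lt1.
  - by left; rewrite -eq2.
  - by left; rewrite eq1.
  - by right; split; [rewrite eq1 | exact: (mo_trans mo le1 le2)].
(* Terms of degree >= N are smaller than the one at al0, so it suffices to
   maximize over the nonzero terms of degree < N. *)
pose cands := [seq al <- [seq bmnm x | x <- enum {: 'X_{1..n < N}}] | g al != 0].
have [m m_cand m_max] := seq_max_total al0 cands R_total R_trans.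
have gm0 : g m != 0.
  by move: m_cand; rewrite inE mem_filter => /orP[/eqP->|/andP[]].
have Ral0m : R al0 m by apply: m_max; rewrite mem_head.
exists m; split=> //; split=> // be gbe.
have [lt_be|ge_be] := ltnP (mdeg be) N.
  apply: m_max; rewrite inE mem_filter gbe; apply/orP; right.
  by apply/mapP; exists (BMultinom lt_be); rewrite ?mem_enum.
left; case: (small be ge_be) => [gbe0|ge]; first by rewrite gbe0 eqxx in gbe.
have lt0 : valr v r (g al0) al0 < valr v r (g be) be.
  by apply: lt_le_trans ge; rewrite ltrDl.
by case: Ral0m => [lt|[<- _]] //; apply: lt_trans lt lt0.
Qed.

End LeadingTerm.

Section LeadingTermProduct.
Variables (K : fieldType) (v : K -> int) (n : nat) (le : rel 'X_{1..n}).
Hypotheses (v_val : discrete_valuation v) (mo : monomial_order le).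
Variables (r : 'I_n -> rat) (f h : pseries K n) (al ga : 'X_{1..n}).
Hypotheses (LTf : is_LT v le r f (f al) al) (LTh : is_LT v le r h (h ga) ga).

Let V := valr v r (f al) al + valr v r (h ga) ga.

Lemma valr_mul_term_ge b d : (b <= d)%MM -> f b * h (d - b)%MM != 0 ->
  V <= valr v r (f b * h (d - b)%MM) d /\
  (valr v r (f b * h (d - b)%MM) d = V -> le b al /\ le (d - b)%MM ga).
Proof.
move=> le_bd; rewrite mulf_eq0 negb_or => /andP[fb0 hdb0].
have [ge_f eq_f] := is_LT_valr_le LTf fb0.
have [ge_h eq_h] := is_LT_valr_le LTh hdb0.
have := valrM r b (d - b)%MM v_val fb0 hdb0; rewrite addmC submK // => ->.
rewrite /V; split=> [|E]; first lra.
by split; [apply: eq_f | apply: eq_h]; apply/eqP; rewrite eq_le; apply/andP; split; lra.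
Qed.

Lemma valr_mul_term_gt b : (b <= al + ga)%MM -> b != al ->
  f b * h (al + ga - b)%MM != 0 ->
  V < valr v r (f b * h (al + ga - b)%MM) (al + ga)%MM.
Proof.
move=> le_b neq_b term0; have [ge eq] := valr_mul_term_ge le_b term0.
rewrite lt_neqAle ge andbT; apply: contra neq_b => /eqP/esym/eq [le_bal le_ga].
by apply/eqP; apply: (mo_add_eq mo le_bal le_ga); rewrite addmC submK.
Qed.

Lemma valr_ps_mul_ge d : ps_mul f h d != 0 ->
  V <= valr v r (ps_mul f h d) d /\
  (valr v r (ps_mul f h d) d = V -> le d (al + ga)%MM).
Proof.
move=> /(val_sum_ge_term v_val) [b [_ le_bd term0 le_term]].
have [ge eq] := valr_mul_term_ge le_bd term0.
have le_valr : valr v r (f b * h (d - b)%MM) d <= valr v r (ps_mul f h d) d.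
  by rewrite ler_valr.
split=> [|E]; first exact: le_trans ge le_valr.
have [le_bal le_ga] : le b al /\ le (d - b)%MM ga.
  by apply: eq; apply/eqP; rewrite eq_le ge -E le_valr.
by rewrite -(submK le_bd) addmC; apply: mo_add2.
Qed.

Lemma valr_ps_mul_LT :
  ps_mul f h (al + ga)%MM != 0 /\
  valr v r (ps_mul f h (al + ga)%MM) (al + ga)%MM = V.
Proof.
have al_lt : (mdeg al < (mdeg (al + ga)%MM).+1)%N by rewrite mdegD ltnS leq_addr.
have [_ [fal0 _]] := LTf; have [_ [hga0 _]] := LTh.
have lead0 : f al * h ga != 0 by rewrite mulf_neq0.
have ga_eq : (al + ga - al = ga)%MM by rewrite addmC addmK.
rewrite /ps_mul (bigD1 (BMultinom al_lt)) ?lem_addr //= ga_eq.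
set rest := (X in _ + X).
have [sum0 val_sum] : f al * h ga + rest != 0 /\ v (f al * h ga + rest) = v (f al * h ga).
  have [->|rest0] := eqVneq rest 0; first by rewrite addr0.
  apply: val_add_dominant => //.
  have [b [_ /andP[le_b neq_b] term0 le_term]] := val_sum_ge_term v_val rest0.
  apply: lt_le_trans le_term; rewrite -(ltr_valr _ r _ _ (al + ga)%MM).
  by rewrite valrM //; apply: valr_mul_term_gt.
by split=> //; rewrite valrE val_sum -valrE valrM.
Qed.

Lemma is_LT_ps_mul :
  is_LT v le r (ps_mul f h) (ps_mul f h (al + ga)%MM) (al + ga)%MM.
Proof.
have [lead0 val_lead] := valr_ps_mul_LT; split=> //; split=> // be be0.
have [ge eq] := valr_ps_mul_ge be0; rewrite val_lead.
move: ge; rewrite le_eqVlt => /orP[/eqP E|lt]; last by left.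
by right; split; [|apply: eq].
Qed.

End LeadingTermProduct.

Lemma pseries_zero_or_support (K : fieldType) n (g : pseries K n) :
  (forall x, g x = 0) \/ exists x, g x != 0.
Proof.
have [|none] := classic (exists x, g x != 0); first by right.
by left=> x; apply/eqP/negPn/negP => gx0; apply: none; exists x.
Qed.

Section PrincipalIdeal.
Variables (K : fieldType) (v : K -> int) (n : nat) (le : rel 'X_{1..n}).
Variables (P : ('I_n -> rat) -> Prop) (f : pseries K n).

Definition ps1 : pseries K n := fun x => if x == 0%MM then 1 else 0.

Lemma in_KXP_ps1 : in_KXP v P ps1.
Proof.
move=> r _ M; exists 1%N => al deg_al; left; rewrite /ps1.
by case: eqP deg_al => // ->; rewrite mdeg0.
Qed.

Lemma ps_mulr1 x : ps_mul f ps1 x = f x.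
Proof.
have x_lt : (mdeg x < (mdeg x).+1)%N by [].
rewrite /ps_mul (bigD1 (BMultinom x_lt)) ?lepm_refl //= big1 ?addr0.
  have -> : (x - x = 0)%MM by apply/mnmP => i; rewrite mnmBE mnm0E subnn.
  by rewrite /ps1 eqxx mulr1.
move=> b /andP[le_bx neq_bx]; rewrite /ps1; case: eqP => [E|]; last by rewrite mulr0.
have eq_bx : bmnm b = x by move: (submK le_bx); rewrite E add0m.
by move: neq_bx; rewrite -(inj_eq val_inj) /= eq_bx eqxx.
Qed.

Lemma ps_mulr0 h : (forall x, h x = 0) -> forall x, ps_mul f h x = 0.
Proof. by move=> h0 x; rewrite /ps_mul big1 // => b _; rewrite h0 mulr0. Qed.

Lemma ps_mul0r h : (forall x, f x = 0) -> forall x, ps_mul f h x = 0.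
Proof. by move=> f0 x; rewrite /ps_mul big1 // => b _; rewrite f0 mul0r. Qed.

Hypotheses (v_val : discrete_valuation v) (mo : monomial_order le).

Lemma LT_principal_ideal_dvd r al g b be :
  P r -> is_LT v le r f (f al) al -> principal_ideal v P f g ->
  is_LT v le r g b be -> (al <= be)%MM.
Proof.
move=> Pr LTf [h [h_conv /functional_extensionality ->]] LTg.
have [h0|[x hx0]] := pseries_zero_or_support h.
  by case: LTg => -> [+ _]; rewrite ps_mulr0 ?eqxx.
have [ga LTh] := LT_exists mo h_conv Pr hx0.
rewrite (LT_uniq mo LTg (is_LT_ps_mul v_val mo LTf LTh)); exact: lem_addr.
Qed.

Lemma LT_ideal_principal r al : P r -> is_LT v le r f (f al) al ->
  forall p, LT_ideal v le r (principal_ideal v P f) p <-> exists q, p = q * 'X_[al].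
Proof.
move=> Pr LTf p; split.
  move=> [m [c [t [t_LT ->]]]].
  apply: (big_ind (fun p => exists q, p = q * 'X_[al])).
  - by exists 0; rewrite mul0r.
  - by move=> _ _ [q1 ->] [q2 ->]; exists (q1 + q2); rewrite mulrDl.
  move=> i _; have [g [b [be [Jg [LTg ->]]]]] := t_LT i.
  exists (c i * (b *: 'X_[be - al])).
  by rewrite -mulrA -scalerAl -mpolyXD submK // (LT_principal_ideal_dvd Pr LTf Jg LTg).
move=> [q ->]; have [_ [fal0 _]] := LTf.
exists 1%N, (fun _ => q * (f al)^-1%:MP), (fun _ => f al *: 'X_[al]); split.
  move=> _; exists f, (f al), al; split=> //.
  by exists ps1; split; [apply: in_KXP_ps1 | move=> x; rewrite ps_mulr1].
by rewrite big_ord1 -mulrA mul_mpolyC scalerA mulVf // scale1r.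
Qed.

Lemma LT_ideal_principal0 r : (forall x, f x = 0) ->
  forall p, LT_ideal v le r (principal_ideal v P f) p <-> p = 0.
Proof.
move=> f0 p; split=> [[m [c [t [t_LT ->]]]]|->].
  apply: big1 => i _; have [g [b [be [[h [_ g_eq]] [[-> [+ _]] _]]]]] := t_LT i.
  by rewrite g_eq ps_mul0r ?eqxx.
by exists 0%N, (fun _ => 0), (fun _ => 0); split; [case | rewrite big_ord0].
Qed.

End PrincipalIdeal.

Section Polyhedron.
Variables (n l : nat) (s : 'I_l -> 'I_n -> rat).

Lemma in_P_vertex t : in_P s (s t).
Proof.
exists 1%N, (fun _ => 1), (fun _ => s t); split=> [_|]; first exact: ler01.
split; first by rewrite big_ord1.
by split=> [_|j]; [exists t | rewrite big_ord1 mul1r].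
Qed.

Lemma in_P_wdeg_le r (d : 'X_{1..n}) : in_P s r -> exists t, wdeg r d <= wdeg (s t) d.
Proof.
move=> [m [lam [p [lam_ge0 [lam_sum [p_le r_eq]]]]]].
case: m lam p lam_ge0 lam_sum p_le r_eq => [|m] lam p lam_ge0 lam_sum p_le r_eq.
  by move: lam_sum; rewrite big_ord0 => /eqP; rewrite eq_sym oner_eq0.
have [t0 _] := p_le ord0.
have [t _ t_max] := seq_max_total (R := fun x y => wdeg (s x) d <= wdeg (s y) d)
  t0 (enum 'I_l) (fun x y => elimT orP (le_total _ _)) (fun x y z => @le_trans _ _ _ _ _).
exists t.
have -> : wdeg r d = \sum_(k < m.+1) lam k * wdeg (p k) d.
  rewrite /wdeg; under eq_bigr => j _ do rewrite r_eq mulr_suml.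
  rewrite exchange_big; apply: eq_bigr => k _; rewrite mulr_sumr.
  by apply: eq_bigr => j _; rewrite mulrA.
rewrite -[wdeg (s t) d]mul1r -lam_sum mulr_suml; apply: ler_sum => k _.
apply: ler_wpM2l; first exact: lam_ge0.
have [i p_le_i] := p_le k.
apply: le_trans (t_max i _); last by rewrite inE mem_enum orbT.
by apply: ler_sum => j _; apply: ler_wpM2r; [apply: ler0n | apply: p_le_i].
Qed.

End Polyhedron.

Section ExponentBound.
Variables (K : fieldType) (v : K -> int) (n l : nat) (le : rel 'X_{1..n}).
Variables (s : 'I_l -> 'I_n -> rat) (f : pseries K n).

Lemma LT_valr_vertex_le r al be : in_P s r -> is_LT v le r f (f al) al ->
  (be <= al)%MM -> f be != 0 ->
  exists t, valr v (s t) (f al) al <= valr v (s t) (f be) be.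
Proof.
move=> Pr LTf le_be fbe0; have [t le_t] := in_P_wdeg_le (al - be)%MM Pr.
have [ge_r _] := is_LT_valr_le LTf fbe0.
have wdeg_al r' : wdeg r' al = wdeg r' (al - be)%MM + wdeg r' be.
  by rewrite -wdegD submK.
by exists t; move: ge_r; rewrite !valrE !wdeg_al; lra.
Qed.

Hypothesis f_conv : in_KXP v (in_P s) f.

Lemma LT_exponent_bounded : exists D, forall r al,
  in_P s r -> is_LT v le r f (f al) al -> (mdeg al < D)%N.
Proof.
apply: NNPP => unbounded.
have large D : exists ral : ('I_n -> rat) * 'X_{1..n},
    [/\ in_P s ral.1, is_LT v le ral.1 f (f ral.2) ral.2 & (D <= mdeg ral.2)%N].
  apply: NNPP => none; apply: unbounded; exists D => r al Pr LTal.
  by rewrite ltnNge; apply/negP => le_D; apply: none; exists (r, al).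
have [u uP] := choice _ large.
have [phi phi_incr phi_mono] := dickson (fun k => (u k).2).
pose al0 := (u (phi 0%N)).2.
have f_al0 : f al0 != 0 by have [_ [_ [+ _]] _] := uP (phi 0%N).
have conv t : exists N : nat, forall al, (N <= mdeg al)%N ->
    f al = 0 \/ valr v (s t) (f al0) al0 + 1 <= valr v (s t) (f al) al.
  exact: f_conv (in_P_vertex s t) _.
have [N N_conv] := choice _ conv.
pose k := phi (\max_(t < l) N t).
have [Pr LTk deg_k] := uP k.
have [t le_t] := LT_valr_vertex_le Pr LTk (phi_mono 0%N _ (leq0n _)) f_al0.
have phi_ge j : (j <= phi j)%N.
  by elim: j => // j IH; apply: leq_ltn_trans IH (phi_incr _ _ (ltnSn j)).
have N_le : (N t <= mdeg (u k).2)%N.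
  by apply: leq_trans (leq_bigmax t) (leq_trans (phi_ge _) deg_k).
case: (N_conv t _ N_le) => [fk0|]; last by lra.
by case: LTk => _ []; rewrite fk0 eqxx.
Qed.

End ExponentBound.

Theorem mainTheorem13 (K : fieldType) (v : K -> int) (n l : nat)
    (s : 'I_l -> 'I_n -> rat) (le : rel 'X_{1..n}) (f : pseries K n) :
  discrete_valuation v -> v_complete v -> monomial_order le ->
  in_KXP v (in_P s) f ->
  exists (N : nat) (F : nat -> {mpoly K[n]} -> Prop),
    forall r : 'I_n -> rat, in_P s r ->
      exists i : nat, (i < N)%N /\
        forall p : {mpoly K[n]},
          LT_ideal v le r (principal_ideal v (in_P s) f) p <-> F i p.
Proof.
move=> v_val _ mo f_conv.
have [f0|[x0 fx0]] := pseries_zero_or_support f.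
  exists 1%N, (fun _ p => p = 0) => r _; exists 0%N; split=> // p.
  exact: LT_ideal_principal0.
have [D D_bound] := LT_exponent_bounded le f_conv.
pose E := [seq bmnm x | x <- enum {: 'X_{1..n < D}}].
exists (size E), (fun i p => exists q, p = q * 'X_[nth 0%MM E i]) => r Pr.
have [al LTal] := LT_exists mo f_conv Pr fx0.
have al_E : al \in E.
  by apply/mapP; exists (BMultinom (D_bound r al Pr LTal)); rewrite ?mem_enum.
exists (index al E); rewrite index_mem nth_index //; split=> // p.
exact: LT_ideal_principal.
Qed.
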